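(* Let $V$ be an $R$-module which admits an infinitesimal character (i.e., every element of the center $Z(R)$ acts on $V$ by a scalar), and let $w\in V$ be a nonzero Whittaker vector of type $\eta$. Then the submodule $Rw\subseteq V$ is irreducible.
   Context: Let $f\in\mathbb{C}[H]$ be a polynomial. $R=R(f)$ is the associative $\mathbb{C}$-algebra generated by $E,F,H$ with relations $EF-FE=f(H)$, $HE-EH=E$, $HF-FH=-F$. Let $R(E)=\mathbb{C}[E]$; $Z(R)$ is the center of $R$. Fix an algebra homomorphism $\eta:R(E)\to\mathbb{C}$ with $\eta(E)\neq 0$. A vector $w$ of an $R$-module is a Whittaker vector of type $\eta$ if $Ew=\eta(E)w$. *)

From HB Require Import structures.
From mathcomp Require Import all_boot all_order all_algebra.
From mathcomp Require Import complex.
From mathcomp Require Import Rstruct.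
Set Implicit Arguments. Unset Strict Implicit. Unset Printing Implicit Defensive.
Import Order.TTheory GRing.Theory Num.Theory.
Local Open Scope ring_scope.

Definition C : Type := complex Rdefinitions.R.
HB.instance Definition _ := GRing.Field.on C.

(* Terms of the free associative C-algebra on E, F, H; every element of
   R(f) is the image of such a term. *)
Inductive rterm : Type :=
| tE | tF | tH
| tC of C
| tAdd of rterm & rterm
| tMul of rterm & rterm.

Section Action.
Variable V : lmodType C.
Variables (e fF h : V -> V).

Definition polyact (p : {poly C}) (v : V) : V :=
  \sum_(i < size p) p`_i *: iter i h v.

Fixpoint tact (t : rterm) (v : V) : V :=
  match t with
  | tE => e v
  | tF => fF v
  | tH => h v
  | tC c => c *: v
  | tAdd s u => tact s v + tact u v
  | tMul s u => tact s (tact u v)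
  end.
End Action.

Definition is_Rmod (f : {poly C}) (V : lmodType C) (e fF h : V -> V) : Prop :=
  linear e /\ linear fF /\ linear h /\
  forall v : V,
    [/\ e (fF v) - fF (e v) = polyact h f v,
        h (e v) - e (h v) = e v
      & h (fF v) - fF (h v) = - fF v].

(* The image of t in R(f) lies in the center Z(R(f)): it commutes with the
   generators E, F, H in R(f).  Since R(f) acts faithfully on itself, this is
   expressed as: t commutes with E, F, H in every R(f)-module. *)
Definition central (f : {poly C}) (t : rterm) : Prop :=
  forall (W : lmodType C) (e fF h : W -> W), is_Rmod f e fF h ->
    forall w : W,
      [/\ tact e fF h (tMul t tE) w = tact e fF h (tMul tE t) w,
          tact e fF h (tMul t tF) w = tact e fF h (tMul tF t) w
        & tact e fF h (tMul t tH) w = tact e fF h (tMul tH t) w].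

Definition has_inf_char (f : {poly C}) (V : lmodType C) (e fF h : V -> V) : Prop :=
  forall t, central f t -> exists c : C, forall v : V, tact e fF h t v = c *: v.

Definition is_submodule (V : lmodType C) (e fF h : V -> V) (S : V -> Prop) : Prop :=
  [/\ S 0,
      (forall x y, S x -> S y -> S (x + y)),
      (forall (c : C) x, S x -> S (c *: x)) &
      (forall x, S x -> [/\ S (e x), S (fF x) & S (h x)])].

Definition cyclic_sub (V : lmodType C) (e fF h : V -> V) (w : V) : V -> Prop :=
  fun v => exists t, v = tact e fF h t w.

Definition irreducible_sub (V : lmodType C) (e fF h : V -> V) (M : V -> Prop) : Prop :=
  (exists x, M x /\ x <> 0) /\
  forall S : V -> Prop, is_submodule e fF h S -> (forall x, S x -> M x) ->
    (forall x, S x -> x = 0) \/ (forall x, M x -> S x).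

From HB Require Import structures.
From mathcomp Require Import all_boot all_order all_algebra zify complex Rstruct.
From Stdlib Require Import Classical.
Import GRing.Theory Num.Theory.
Set Implicit Arguments. Unset Strict Implicit. Unset Printing Implicit Defensive.
Local Open Scope ring_scope.

(* Choose u with u(H) - u(H - 1) = f(H).  Then the Casimir element
   Omega = FE + u(H) is central, so it acts on R w by a scalar c, and
   E w = eta w gives F w = eta^-1 (c - u(H)) w: hence R w = C[H] w.  On C[H] w,
   E - eta maps p(H) w to -eta (p(H) - p(H - 1)) w, a polynomial of degree one
   less; descending on the degree, every nonzero submodule of R w contains w. *)

Section PolyAct.
Variables (V : lmodType C) (h : V -> V).
Hypothesis lin_h : linear h.
HB.instance Definition _ := GRing.isLinear.Build C V V *:%R h lin_h.

Lemma polyact_widen n (p : {poly C}) v : (size p <= n)%N ->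
  polyact h p v = \sum_(i < n) p`_i *: iter i h v.
Proof.
move=> le_pn; rewrite /polyact (big_ord_widen n (fun i => p`_i *: iter i h v) le_pn).
rewrite big_mkcond; apply: eq_bigr => i _; case: ltnP => // le_pi.
by rewrite nth_default // scale0r.
Qed.

Lemma polyact0 v : polyact h 0 v = 0.
Proof. by rewrite /polyact size_poly0 big_ord0. Qed.

Lemma polyactD (p q : {poly C}) v : polyact h (p + q) v = polyact h p v + polyact h q v.
Proof.
rewrite !(@polyact_widen (maxn (size p) (size q))) ?leq_maxl ?leq_maxr ?size_polyD //.
by rewrite -big_split; apply: eq_bigr => i _; rewrite coefD scalerDl.
Qed.

Lemma polyactZ a (p : {poly C}) v : polyact h (a *: p) v = a *: polyact h p v.
Proof.
rewrite !(@polyact_widen (size p)) ?size_scale_leq // scaler_sumr.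
by apply: eq_bigr => i _; rewrite coefZ scalerA.
Qed.

Lemma polyactB (p q : {poly C}) v : polyact h (p - q) v = polyact h p v - polyact h q v.
Proof. by rewrite polyactD -[- q]scaleN1r polyactZ scaleN1r. Qed.

Lemma polyactC c v : polyact h c%:P v = c *: v.
Proof. by rewrite (@polyact_widen 1) ?size_polyC ?leq_b1 // big_ord1 coefC. Qed.

Lemma polyactMX (p : {poly C}) v : polyact h (p * 'X) v = h (polyact h p v).
Proof.
have le_pX : (size (p * 'X)%R <= (size p).+1)%N.
  by have [->|p_neq0] := eqVneq p 0; rewrite ?mul0r ?size_poly0 ?size_mulX.
rewrite (polyact_widen v le_pX) big_ord_recl coefMX /= scale0r add0r.
by rewrite /polyact linear_sum; apply: eq_bigr => i _; rewrite coefMX linearZ.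
Qed.

Lemma polyactMXaddC (p : {poly C}) c v :
  polyact h (p * 'X + c%:P) v = h (polyact h p v) + c *: v.
Proof. by rewrite polyactD polyactMX polyactC. Qed.

Lemma iter_linear i : linear (iter i h).
Proof. by elim: i => [|i IH] a x y //=; rewrite IH linearP. Qed.

Lemma polyact_linear (p : {poly C}) : linear (polyact h p).
Proof.
move=> a x y; rewrite /polyact scaler_sumr -big_split; apply: eq_bigr => i _.
by rewrite (iter_linear i) scalerDr !scalerA mulrC.
Qed.

HB.instance Definition _ (p : {poly C}) :=
  GRing.isLinear.Build C V V *:%R (polyact h p) (polyact_linear p).

Lemma polyact_vec0 (p : {poly C}) : polyact h p 0 = 0.
Proof. exact: linear0. Qed.

Lemma polyact_vecZ (p : {poly C}) a v : polyact h p (a *: v) = a *: polyact h p v.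
Proof. exact: linearZ. Qed.

Lemma polyactM (p q : {poly C}) v : polyact h (p * q) v = polyact h p (polyact h q v).
Proof.
elim/poly_ind: p => [|p c IH]; first by rewrite mul0r !polyact0.
rewrite mulrDl mulrAC mul_polyC polyactD polyactMX polyactZ IH.
by rewrite polyactMXaddC.
Qed.

Lemma polyact_comm (p : {poly C}) v : polyact h p (h v) = h (polyact h p v).
Proof.
elim/poly_ind: p => [|p c IH]; first by rewrite !polyact0 linear0.
by rewrite !polyactMXaddC IH linearD linearZ.
Qed.

End PolyAct.

Section Shift.
Variables (V : lmodType C) (g h : V -> V) (a : C).
Hypotheses (lin_g : linear g) (lin_h : linear h).
Hypothesis comm_hg : forall v, h (g v) - g (h v) = a *: g v.
HB.instance Definition _ := GRing.isLinear.Build C V V *:%R g lin_g.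
HB.instance Definition _ := GRing.isLinear.Build C V V *:%R h lin_h.

Lemma polyact_shift (p : {poly C}) v :
  g (polyact h p v) = polyact h (p \Po ('X - a%:P)) (g v).
Proof.
have g_h x : g (h x) = h (g x) - a *: g x by rewrite -(comm_hg x) opprB addrC subrK.
elim/poly_ind: p v => [|p c IH] v; first by rewrite comp_poly0 !polyact0 linear0.
rewrite comp_polyD comp_polyM comp_polyX comp_polyC mulrBr.
rewrite polyactMXaddC // polyactD // polyactB // polyactMX // polyactM // !polyactC //.
by rewrite linearD linearZ /= g_h IH polyact_vecZ.
Qed.

End Shift.

Definition backdiff (p : {poly C}) : {poly C} := p - (p \Po ('X - 1)).

Lemma backdiffD p q : backdiff (p + q) = backdiff p + backdiff q.
Proof. by rewrite /backdiff comp_polyD opprD addrACA. Qed.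

Lemma backdiffZ a p : backdiff (a *: p) = a *: backdiff p.
Proof. by rewrite /backdiff comp_polyZ scalerBr. Qed.

Lemma backdiffC c : backdiff c%:P = 0.
Proof. by rewrite /backdiff comp_polyC subrr. Qed.

Lemma backdiff0 : backdiff 0 = 0.
Proof. by rewrite -polyC0 backdiffC. Qed.

Fixpoint rising (n : nat) : {poly C} :=
  if n is m.+1 then rising m * ('X + m%:R%:P) else 1.

Lemma rising_monic n : rising n \is monic.
Proof. by elim: n => [|n IH] /=; rewrite ?monic1 // monicMr ?monicXaddC. Qed.

Lemma size_rising n : size (rising n) = n.+1.
Proof.
elim: n => [|n IH] /=; first by rewrite size_poly1.
by rewrite size_Mmonic ?monicXaddC ?monic_neq0 ?rising_monic // IH size_XaddC addn2.
Qed.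

Lemma coef_rising_top n : (rising n)`_n = 1.
Proof. by have /monicP := rising_monic n; rewrite /lead_coef size_rising. Qed.

Lemma rising_comp_subX1 n : rising n.+1 \Po ('X - 1) = ('X - 1) * rising n.
Proof.
elim: n => [|n IH]; first by rewrite /= mul1r polyC0 addr0 comp_polyX mulr1.
rewrite [rising n.+2]/= comp_polyM IH comp_polyD comp_polyX comp_polyC /=.
by rewrite mulrS polyCD polyC1 addrA subrK mulrA.
Qed.

Lemma backdiff_rising n : backdiff (rising n.+1) = n.+1%:R *: rising n.
Proof.
rewrite /backdiff rising_comp_subX1 [rising n.+1]/= mulrC -mulrBl.
by rewrite opprB addrC subrKA -mul_polyC mulrS polyCD polyC1.
Qed.

Lemma rising_decomp n (p : {poly C}) :
  (size p <= n.+1)%N -> (size (p - p`_n *: rising n)%R <= n)%N.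
Proof.
move=> le_pn; apply/leq_sizeP => j; rewrite leq_eqVlt coefB coefZ.
case/predU1P => [<-|lt_nj]; first by rewrite coef_rising_top mulr1 subrr.
have le_pj : (size p <= j)%N := leq_trans le_pn lt_nj.
have le_rj : (size (rising n) <= j)%N by rewrite size_rising.
by rewrite (nth_default 0 le_pj) (nth_default 0 le_rj) mulr0 subrr.
Qed.

Lemma size_backdiff p : size (backdiff p) = (size p).-1.
Proof.
have [n] := ubnP (size p); elim: n p => // n IH p.
case sp: (size p) => [|[|m]] lt_pn /=.
- by move/eqP: sp; rewrite size_poly_eq0 => /eqP ->; rewrite backdiff0 size_poly0.
- by rewrite (size1_polyC (eq_leq sp)) backdiffC size_poly0.
have lc_neq0 : p`_m.+1 != 0.
  have : lead_coef p != 0 by rewrite lead_coef_eq0 -size_poly_eq0 sp.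
  by rewrite lead_coefE sp.
set r := p - p`_m.+1 *: rising m.+1.
have le_rm : (size r <= m.+1)%N by apply: rising_decomp; rewrite sp.
have -> : backdiff p = (p`_m.+1 * m.+1%:R) *: rising m + backdiff r.
  by rewrite -scalerA -backdiff_rising -backdiffZ -backdiffD addrC subrK.
have c_neq0 : p`_m.+1 * m.+1%:R != 0 by rewrite mulf_eq0 negb_or lc_neq0 pnatr_eq0.
have lt_rn : (size r < n)%N by lia.
by rewrite size_polyDl size_scale ?size_rising // IH //; lia.
Qed.

Lemma backdiff_surj q : exists p, backdiff p = q.
Proof.
elim: (size q) {-2}q (leqnn (size q)) => [|n IH] {}q le_qn.
  by exists 0; move: le_qn; rewrite size_poly_leq0 => /eqP ->; rewrite backdiff0.
have [p Dp] := IH _ (rising_decomp le_qn).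
exists (p + (q`_n / n.+1%:R) *: rising n.+1).
by rewrite backdiffD backdiffZ backdiff_rising Dp scalerA divfK ?pnatr_eq0 // subrK.
Qed.

Lemma submodule_tact (V : lmodType C) (e fF h : V -> V) (S : V -> Prop) :
  is_submodule e fF h S -> forall t v, S v -> S (tact e fF h t v).
Proof.
case=> _ SD SZ Sops; elim=> [|||a|t1 IH1 t2 IH2|t1 IH1 t2 IH2] v Sv /=.
- by case: (Sops v Sv).
- by case: (Sops v Sv).
- by case: (Sops v Sv).
- exact: SZ.
- exact: SD (IH1 _ Sv) (IH2 _ Sv).
- exact: IH1 (IH2 _ Sv).
Qed.

Fixpoint horner_term (s : seq C) : rterm :=
  if s is c :: s' then tAdd (tMul tH (horner_term s')) (tC c) else tC 0.

Definition casimir (u : {poly C}) : rterm := tAdd (tMul tF tE) (horner_term u).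

Lemma comp_Xsub1_Xadd1 : ('X - 1) \Po ('X + 1) = 'X :> {poly C}.
Proof. by rewrite comp_polyB comp_polyX -polyC1 comp_polyC addrK. Qed.

Section RModule.
Variables (f : {poly C}) (V : lmodType C) (e fF h : V -> V).
Hypothesis RV : is_Rmod f e fF h.

Let lin_e : linear e. Proof. by case: RV. Qed.
Let lin_fF : linear fF. Proof. by case: RV => _ []. Qed.
Let lin_h : linear h. Proof. by case: RV => _ [_ []]. Qed.
HB.instance Definition _ := GRing.isLinear.Build C V V *:%R e lin_e.
HB.instance Definition _ := GRing.isLinear.Build C V V *:%R fF lin_fF.
HB.instance Definition _ := GRing.isLinear.Build C V V *:%R h lin_h.

Let e_fF v : e (fF v) = fF (e v) + polyact h f v.
Proof. by case: RV => _ [_ [_ /(_ v) [<- _ _]]]; rewrite addrC subrK. Qed.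

Let e_h v : e (h v) = h (e v) - e v.
Proof. by case: RV => _ [_ [_ /(_ v) [_ + _]]] => {2}<-; rewrite opprB addrC subrK. Qed.

Let fF_h v : fF (h v) = h (fF v) + fF v.
Proof.
case: RV => _ [_ [_ /(_ v) [_ _ comm_h_fF]]].
by rewrite -[X in _ = _ + X]opprK -comm_h_fF opprB addrC subrK.
Qed.

Lemma e_polyact p v : e (polyact h p v) = polyact h (p \Po ('X - 1)) (e v).
Proof.
rewrite -polyC1; apply: polyact_shift => // x.
by rewrite e_h opprB addrC subrK scale1r.
Qed.

Lemma fF_polyact p v : fF (polyact h p v) = polyact h (p \Po ('X + 1)) (fF v).
Proof.
have -> : 'X + 1 = 'X - (-1)%:P :> {poly C} by rewrite polyCN opprK polyC1.
apply: polyact_shift => // x.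
by rewrite fF_h opprD addrA subrr add0r scaleN1r.
Qed.

Lemma tact_horner_term (p : {poly C}) v :
  tact e fF h (horner_term p) v = polyact h p v.
Proof.
rewrite -{2}[p]polyseqK; elim: (polyseq p) => [|c s IH] /=.
  by rewrite scale0r polyact0.
by rewrite IH cons_poly_def polyactMXaddC.
Qed.

Lemma casimir_commutes u : backdiff u = f -> forall v,
  [/\ tact e fF h (tMul (casimir u) tE) v = tact e fF h (tMul tE (casimir u)) v,
      tact e fF h (tMul (casimir u) tF) v = tact e fF h (tMul tF (casimir u)) v
    & tact e fF h (tMul (casimir u) tH) v = tact e fF h (tMul tH (casimir u)) v].
Proof.
move=> Du v; rewrite /= !tact_horner_term; split.
- rewrite linearD /= e_fF e_polyact -Du /backdiff polyactB //.
  by rewrite -addrA subrK.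
- rewrite e_fF !linearD /= -addrA; congr (_ + _).
  rewrite !fF_polyact -polyactD //; congr (polyact h _ _).
  by rewrite -Du /backdiff comp_polyB -comp_polyA comp_Xsub1_Xadd1 comp_polyXr subrK.
- by rewrite e_h linearB /= fF_h polyact_comm // linearD /= addrK.
Qed.

Variables (eta : C) (w : V).
Hypotheses (eta_neq0 : eta != 0) (Ew : e w = eta *: w).

Lemma fF_whittaker u c : (forall v, tact e fF h (casimir u) v = c *: v) ->
  fF w = polyact h (eta^-1 *: (c%:P - u)) w.
Proof.
move=> /(_ w) /=; rewrite tact_horner_term Ew linearZ /= => casimir_w.
by rewrite polyactZ // polyactB // polyactC // -casimir_w addrK scalerA mulVf ?scale1r.
Qed.

Lemma e_polyact_whittaker p :
  e (polyact h p w) - eta *: polyact h p w = polyact h ((- eta) *: backdiff p) w.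
Proof.
rewrite e_polyact Ew polyact_vecZ // polyactZ // /backdiff polyactB // scalerBr.
by rewrite !scaleNr opprK addrC.
Qed.

Lemma submodule_whittaker_descent S (p : {poly C}) : is_submodule e fF h S ->
    (1 < size p)%N -> S (polyact h p w) -> polyact h p w != 0 ->
  exists2 q : {poly C}, (size q < size p)%N & S (polyact h q w) /\ polyact h q w != 0.
Proof.
move=> subS lt1p Sp p_neq0; have [_ SD SZ Sops] := subS.
have Sy : S (polyact h ((- eta) *: backdiff p) w).
  rewrite -e_polyact_whittaker; apply: SD; first by case: (Sops _ Sp).
  by rewrite -scaleNr; apply: SZ.
have [y0|y_neq0] := eqVneq (polyact h ((- eta) *: backdiff p) w) 0; last first.
  by exists ((- eta) *: backdiff p); rewrite ?size_scale ?oppr_eq0 ?size_backdiff //; lia.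
(* (E - eta) kills p(H) w; reduce p modulo its backward difference. *)
have d0 : polyact h (backdiff p) w = 0.
  by move/eqP: y0; rewrite polyactZ // scaler_eq0 oppr_eq0 (negbTE eta_neq0) => /eqP.
have d_neq0 : backdiff p != 0 by rewrite -size_poly_eq0 size_backdiff; lia.
have Dp : polyact h p w = polyact h (p %% backdiff p) w.
  by rewrite {1}(divp_eq p (backdiff p)) polyactD // polyactM // d0 polyact_vec0 // add0r.
exists (p %% backdiff p); last by rewrite -Dp.
have : (size (p %% backdiff p)%R < size (backdiff p))%N by rewrite ltn_modp.
by rewrite size_backdiff => /leq_trans; apply; apply: leq_pred.
Qed.

Lemma submodule_whittaker S (p : {poly C}) : is_submodule e fF h S ->
  S (polyact h p w) -> polyact h p w != 0 -> S w.
Proof.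
move=> subS; have [n] := ubnP (size p); elim: n p => // n IH p lt_pn Sp p_neq0.
have [le_p1|lt1p] := leqP (size p) 1.
  move: Sp p_neq0; rewrite (size1_polyC le_p1) polyactC // scaler_eq0 negb_or.
  move=> Sp /andP[c_neq0 _]; have [_ _ SZ _] := subS.
  by have := SZ (p`_0)^-1 _ Sp; rewrite scalerA mulVf // scale1r.
have [q lt_qp [Sq q_neq0]] := submodule_whittaker_descent subS lt1p Sp p_neq0.
by apply: (IH q _ Sq q_neq0); lia.
Qed.

Variable u : {poly C}.
Hypothesis Fw : fF w = polyact h u w.

Lemma tact_polyact_whittaker t p :
  exists q, tact e fF h t (polyact h p w) = polyact h q w.
Proof.
elim: t p => [|||a|t1 IH1 t2 IH2|t1 IH1 t2 IH2] p /=.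
- by exists (eta *: (p \Po ('X - 1))); rewrite e_polyact Ew polyact_vecZ // polyactZ.
- by exists ((p \Po ('X + 1)) * u); rewrite fF_polyact Fw polyactM.
- by exists (p * 'X); rewrite polyactMX.
- by exists (a *: p); rewrite polyactZ.
- by have [q1 ->] := IH1 p; have [q2 ->] := IH2 p; exists (q1 + q2); rewrite polyactD.
- by have [q2 ->] := IH2 p; have [q1 ->] := IH1 q2; exists q1.
Qed.

Lemma cyclic_sub_polyact v : cyclic_sub e fF h w v -> exists q, v = polyact h q w.
Proof.
case=> t ->; have [q Dq] := tact_polyact_whittaker t 1.
by exists q; rewrite -Dq -polyC1 polyactC // scale1r.
Qed.

End RModule.

Lemma casimir_central f u : backdiff u = f -> central f (casimir u).
Proof. by move=> Du W e fF h RW; apply: (casimir_commutes RW Du). Qed.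

Unset Implicit Arguments.

Theorem mainTheorem7 (f : {poly C}) (V : lmodType C) (e fF h : V -> V)
    (etaE : C) (w : V) :
  is_Rmod f e fF h ->
  has_inf_char f e fF h ->
  etaE != 0 ->
  w != 0 ->
  e w = etaE *: w ->
  irreducible_sub e fF h (cyclic_sub e fF h w).
Proof.
move=> RV inf_char eta_neq0 w_neq0 Ew.
have [u Du] := backdiff_surj f.
have [c casimir_c] := inf_char _ (casimir_central Du).
have Fw := fF_whittaker RV eta_neq0 Ew casimir_c.
split; first by exists w; split; [exists (tC 1); rewrite /= scale1r | exact/eqP].
move=> S subS S_Rw.
have [[x [Sx x_neq0]]|S0] := classic (exists x, S x /\ x <> 0); last first.
  by left=> x Sx; apply: NNPP => x_neq0; apply: S0; exists x.
right=> _ [t ->]; apply: submodule_tact => //.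
have [q Dx] := cyclic_sub_polyact RV Ew Fw (S_Rw x Sx).
by apply: (submodule_whittaker RV eta_neq0 Ew subS (p := q)); rewrite -Dx //; apply/eqP.
Qed.
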